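(* Let $K\subseteq\mathbb{R}^{n}$ be compact, $T\subseteq\mathbb{R}^{n}$ compact with non-empty interior, $\delta>0$, and let $\Lambda(\delta)\subseteq K$ be a finite $\delta$-net for $K$. Then \[ N_{\omega}(K,T+\delta B_{2}^{n})\le N_{\omega}(K,T,\Lambda(\delta)). \]
   Context: $B_2^n$ is the closed Euclidean unit ball; a set $\Lambda$ is a $\delta$-net for $A$ if $A\subseteq\Lambda+\delta B_2^n$. $\mathbbm{1}_A$ is the indicator of $A$. $N_\omega(K,T)$ is the infimum of $\sum_i\omega_i$ over finite families $\{(x_i,\omega_i)\}$ with $x_i\in\mathbb{R}^n$, $\omega_i\ge0$, and $\sum_i\omega_i\mathbbm{1}_{T}(x-x_i)\ge1$ for all $x\in K$. For a finite set $\Lambda\subseteq\mathbb{R}^n$, $N_\omega(K,T,\Lambda)$ is the infimum of $\sum_{i}\omega_i$ over finite families $\{(x_i,\omega_i)\}$ with $x_i\in\Lambda$, $\omega_i\ge0$, such that $\sum_i\omega_i\mathbbm{1}_T(x-x_i)\ge\mathbbm{1}_K(x)$ for all $x\in\Lambda$. *)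

From HB Require Import structures.
From mathcomp Require Import all_boot all_order all_algebra.
From mathcomp Require Import all_classical all_reals all_analysis.
Set Implicit Arguments. Unset Strict Implicit. Unset Printing Implicit Defensive.
Import Order.TTheory GRing.Theory Num.Theory.
Import numFieldNormedType.Exports.
Local Open Scope classical_set_scope.
Local Open Scope ring_scope.

Definition enorm {R : realType} {n : nat} (x : 'rV[R]_n) : R :=
  Num.sqrt (\sum_(i < n) x ord0 i ^+ 2).

Definition ball2 (R : realType) (n : nat) : set 'rV[R]_n :=
  [set x | enorm x <= 1].

Definition enlarge {R : realType} {n : nat} (T : set 'rV[R]_n) (d : R)
  : set 'rV[R]_n :=
  [set x | exists t, exists b, T t /\ @ball2 R n b /\ x = t + d *: b].

Definition is_net {R : realType} {n : nat} (Lam : seq 'rV[R]_n) (A : set 'rV[R]_n)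
  (d : R) : Prop :=
  A `<=` enlarge [set x | x \in Lam] d.

Definition wsum {R : realType} {n : nat} (T : set 'rV[R]_n)
  (s : seq ('rV[R]_n * R)) (x : 'rV[R]_n) : R :=
  \sum_(p <- s) p.2 * \1_T (x - p.1).

Definition N_omega {R : realType} {n : nat} (K T : set 'rV[R]_n) : \bar R :=
  ereal_inf [set ((\sum_(p <- s) p.2)%:E) | s in
    [set s : seq ('rV[R]_n * R) |
       (forall p, p \in s -> 0 <= p.2) /\
       (forall x, K x -> 1 <= wsum T s x)]].

Definition N_omega_net {R : realType} {n : nat} (K T : set 'rV[R]_n)
  (Lam : seq 'rV[R]_n) : \bar R :=
  ereal_inf [set ((\sum_(p <- s) p.2)%:E) | s in
    [set s : seq ('rV[R]_n * R) |
       (forall p, p \in s -> p.1 \in Lam /\ 0 <= p.2) /\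
       (forall x, x \in Lam -> \1_K x <= wsum T s x)]].

From HB Require Import structures.
From mathcomp Require Import all_boot all_order all_algebra.
From mathcomp Require Import all_classical all_reals all_analysis.
Import Order.TTheory GRing.Theory Num.Theory.
Import numFieldNormedType.Exports.
Local Open Scope classical_set_scope.
Local Open Scope ring_scope.

(* Every x in K is l + d b with l in the net and b in the unit ball; a weighted
   family covering the net points with translates of T covers x with the
   corresponding translates of T + d B_2^n, because x - x_i = (l - x_i) + d b.
   Hence every admissible family for N_omega(K, T, Lambda) is admissible for
   N_omega(K, T + d B_2^n), with the same total weight. *)

Section Enlarge.
Variables (R : realType) (n : nat) (T : set 'rV[R]_n) (d : R).

Lemma enlarge_shift {x b : 'rV[R]_n} : T x -> ball2 b -> enlarge T d (x + d *: b).
Proof. by move=> Tx bb; exists x, b. Qed.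

Lemma indic_le_enlarge_shift (x b : 'rV[R]_n) :
  ball2 b -> \1_T x <= \1_(enlarge T d) (x + d *: b) :> R.
Proof.
move=> bb; rewrite !indicE.
have [/set_mem Tx|_] := boolP (x \in T); last by rewrite ler0n.
by rewrite (mem_set (enlarge_shift Tx bb)).
Qed.

Lemma wsum_le_enlarge_shift (s : seq ('rV[R]_n * R)) (y b : 'rV[R]_n) :
  (forall p, p \in s -> 0 <= p.2) -> ball2 b ->
  wsum T s y <= wsum (enlarge T d) s (y + d *: b).
Proof.
move=> s_ge0 bb; rewrite /wsum !big_seq; apply: ler_sum => p ps.
rewrite addrAC; apply: ler_wpM2l; first exact: s_ge0.
exact: indic_le_enlarge_shift.
Qed.

End Enlarge.

Theorem lemma2p2 (R : realType) (n : nat) (K T : set 'rV[R]_n) (d : R)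
  (Lam : seq 'rV[R]_n) :
  compact K -> compact T -> (interior T !=set0) -> 0 < d ->
  [set x | x \in Lam] `<=` K -> is_net Lam K d ->
  (N_omega K (enlarge T d) <= N_omega_net K T Lam)%E.
Proof.
move=> _ _ _ _ LamK net.
apply: ereal_inf_le_tmp => _ [s [s_net s_cover] <-]; exists s => //.
have s_ge0 p : p \in s -> 0 <= p.2 by case/s_net.
split=> // x Kx.
have [l [b [Laml [bb ->]]]] := net x Kx.
have := s_cover l Laml; rewrite indicE mem_set; last exact: LamK.
by move/le_trans; apply; apply: wsum_le_enlarge_shift.
Qed.
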